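(* Let $k\ge 0$. Let $\mathcal{T}_k$ be the set of pairs of sequences $(b_1,\dots,b_k)$, $(t_1,\dots,t_k)$ such that $\{b_1,\dots,b_k,t_1,\dots,t_k\}=\{1,2,\dots,2k\}$, $b_1>b_2>\dots>b_k$, $t_1>t_2>\dots>t_k$, and $t_i<b_i$ for every $i$. For such a pair let $w$ be the word $b_k\,t_k\,b_{k-1}\,t_{k-1}\cdots b_1\,t_1$ (a permutation of $\{1,\dots,2k\}$). Then $$\sum_{(b,t)\in\mathcal{T}_k} q^{\mathrm{inv}(w)} = q^k\,C_k(q).$$
   Context: For a word/permutation $w=w_1\cdots w_m$, $\mathrm{inv}(w)=\#\{(i,j): i<j,\ w_i>w_j\}$. A Dyck path of length $k$ is a lattice path from $(0,0)$ to $(k,k)$ with unit steps $(1,0)$ (EAST) and $(0,1)$ (NORTH) containing no point $(x,y)$ with $x>y$; its area is the number of unit squares lying below the path and completely above the diagonal $y=x$. The $q$-Catalan polynomial is $C_k(q)=\sum_{P} q^{\mathrm{area}(P)}$, the sum over all Dyck paths $P$ of length $k$; in particular $C_0(q)=1$. (Equivalently, the pairs in $\mathcal{T}_k$ are the standard fillings of a two-row array with $k$ columns, columns decreasing bottom to top, both rows decreasing left to right, and $w$ is its column reading word, read columns right to left, each bottom to top.) *)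

From HB Require Import structures.
From mathcomp Require Import all_boot all_order all_algebra.
Set Implicit Arguments. Unset Strict Implicit. Unset Printing Implicit Defensive.
Import GRing.Theory.

Definition invnum (w : seq nat) : nat :=
  \sum_(i < size w) \sum_(j < size w | i < j) (nth 0 w j < nth 0 w i).

Definition inT (k : nat) (b t : seq nat) : bool :=
  [&& size b == k, size t == k,
      all (fun x => x \in iota 1 (2 * k)) (b ++ t),
      all (fun x => x \in b ++ t) (iota 1 (2 * k)),
      sorted gtn b, sorted gtn t &
      all (fun i => nth 0 t i < nth 0 b i) (iota 0 k)].

Definition wordT (b t : seq nat) : seq nat :=
  flatten [seq [:: p.1; p.2] | p <- rev (zip b t)].

(* lattice paths as step sequences: true = NORTH (0,1), false = EAST (1,0).
   Position after the first i steps is (xpos s i, ypos s i). *)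
Definition xpos (s : seq bool) (i : nat) : nat := count negb (take i s).
Definition ypos (s : seq bool) (i : nat) : nat := count id (take i s).

Definition dyckb (k : nat) (s : seq bool) : bool :=
  [&& size s == 2 * k, count id s == k &
      all (fun i => xpos s i <= ypos s i) (iota 0 (size s).+1)].

(* area: unit squares below the path and completely above the diagonal;
   an EAST step from (x,y) contributes the squares [x,x+1]x[h,h+1], x+1 <= h < y *)
Definition area (s : seq bool) : nat :=
  \sum_(i < size s | ~~ nth false s i) (ypos s i - xpos s i - 1).

Definition qCatalan (k : nat) : {poly int} :=
  \sum_(P : (2 * k).-tuple bool | dyckb k P) 'X^(area P).

(* the generating polynomial sum_{(b,t) in T_k} q^{inv w} ; entries of b,t
   range over 'I_(2k+1) = {0,...,2k}, which contains {1,...,2k} *)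
Definition invGen (k : nat) : {poly int} :=
  \sum_(bt : k.-tuple 'I_(2 * k).+1 * k.-tuple 'I_(2 * k).+1
        | inT k (map val bt.1) (map val bt.2))
     'X^(invnum (wordT (map val bt.1) (map val bt.2))).

From HB Require Import structures.
From mathcomp Require Import all_boot all_order all_algebra.
From mathcomp Require Import zify.
Set Implicit Arguments. Unset Strict Implicit. Unset Printing Implicit Defensive.

(* Record a lattice path of length 2k by the positions of its steps: EAST steps
   at b_1 > ... > b_k, NORTH steps at t_1 > ... > t_k.  The path is a Dyck path
   exactly when t_i < b_i for all i (a ballot condition), so this is a bijection
   from Dyck paths onto T_k.  Both statistics are governed by
   N = #{(i, j) : t_j < b_i}.  As b and t decrease, the inversions of
   w = b_k t_k ... b_1 t_1 are the pairs t_j < b_i with j <= i, while all C(k,2)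
   pairs with j > i satisfy t_j < b_i; so inv(w) = N - C(k,2).  The EAST step at
   position p, the x-th one, adds y - x - 1 squares of area, y being the number
   of NORTH steps before p; the x's sum to C(k,2) and the y's to N, so
   area = N - C(k,2) - k = inv(w) - k. *)

Lemma sum_nat_count (T : Type) (P : pred T) (s : seq T) :
  \sum_(x <- s) (P x : nat) = count P s.
Proof. by rewrite -sumn_count sumnE big_map. Qed.

Lemma invnum_nil : invnum [::] = 0.
Proof. by rewrite /invnum big_ord0. Qed.

Lemma invnum_cons a w : invnum (a :: w) = count (fun y => y < a) w + invnum w.
Proof.
rewrite /invnum /= big_ord_recl big_mkcond big_ord_recl /= add0n; congr (_ + _).
  by rewrite -sum_nat_count (big_nth 0) big_mkord.
apply: eq_bigr => i _; rewrite big_mkcond big_ord_recl /= add0n [RHS]big_mkcond.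
by apply: eq_bigr => j _; rewrite /bump /= !add1n ltnS.
Qed.

Lemma invnum_cat w v :
  invnum (w ++ v) = invnum w + \sum_(a <- w) count (fun y => y < a) v + invnum v.
Proof.
elim: w => [|a w IH] /=; first by rewrite invnum_nil big_nil.
by rewrite !invnum_cons big_cons IH count_cat; lia.
Qed.

Definition nlt_pairs (b t : seq nat) : nat := \sum_(x <- b) count (fun y => y < x) t.

Lemma wordT_cons x b y t : wordT (x :: b) (y :: t) = wordT b t ++ [:: x; y].
Proof. by rewrite /wordT /= rev_cons map_rcons -cats1 flatten_cat. Qed.

Lemma count_wordT (P : pred nat) b t : size b = size t ->
  count P (wordT b t) = count P b + count P t.
Proof.
elim: b t => [|x b IH] [|y t] //= [eq_sz].
by rewrite wordT_cons count_cat IH //=; lia.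
Qed.

Lemma sorted_gtn_cons x s : sorted gtn (x :: s) = all (fun y => y < x) s && sorted gtn s.
Proof. exact/path_sortedE/rev_trans/ltn_trans. Qed.

Lemma count_all_lt x s : all (fun y => y < x) s ->
  count (fun y => y < x) s = size s /\ count (fun y => x < y) s = 0.
Proof.
move=> lt_s_x; split; first by apply/eqP; rewrite -all_count.
apply/eqP; rewrite -leqn0 leqNgt -has_count; apply/hasPn => y /(allP lt_s_x).
by move=> /ltnW; rewrite leqNgt.
Qed.

Lemma invnum_wordT b t : sorted gtn b -> sorted gtn t -> all2 gtn b t ->
  invnum (wordT b t) + 'C(size b, 2) = nlt_pairs b t.
Proof.
elim: b t => [|x b IH] [|y t] //; first by rewrite /= invnum_nil /nlt_pairs big_nil.
rewrite !sorted_gtn_cons /= => /andP [lt_b_x sb] /andP [lt_t_y st] /andP [lt_yx bt].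
have lt_t_x : all (fun z => z < x) t.
  by apply/allP => z /(allP lt_t_y) lt_zy; apply: ltn_trans lt_yx.
have eq_sz : size b = size t by move: bt; rewrite all2E => /andP [/eqP].
have [_ cb] := count_all_lt lt_b_x; have [ctx ct] := count_all_lt lt_t_x.
have [_ ct'] := count_all_lt lt_t_y.
rewrite wordT_cons invnum_cat !invnum_cons invnum_nil /nlt_pairs big_cons /= lt_yx ctx.
under eq_bigr do rewrite addn0.
rewrite !big_split /= !sum_nat_count !count_wordT // cb ct ct' -/(nlt_pairs b t) -(IH t) //.
by rewrite binS bin1 eq_sz; lia.
Qed.

Lemma nlt_pairs_sorted s : sorted gtn s -> nlt_pairs s s = 'C(size s, 2).
Proof.
elim: s => [|x s IH]; first by rewrite /nlt_pairs big_nil.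
rewrite sorted_gtn_cons => /andP [lt_s_x ss].
have [cx _] := count_all_lt lt_s_x.
rewrite /nlt_pairs big_cons /= ltnn cx.
under eq_big_seq => y /(allP lt_s_x) /= lt_yx do rewrite ltnNge (ltnW lt_yx).
rewrite -/(nlt_pairs s s) IH // (binS (size s) 1) bin1 /=; lia.
Qed.

Lemma count_le_all_lt y m s : all (fun z => z < y) s -> y <= m ->
  count (fun z => z <= m) s = size s.
Proof.
move=> lt_s_y le_ym; apply/eqP; rewrite -all_count; apply/allP => z /(allP lt_s_y) /=.
by move=> lt_zy; apply: ltnW (leq_trans lt_zy le_ym).
Qed.

Lemma all2_gtn_ballot b t : sorted gtn b -> sorted gtn t -> all2 gtn b t ->
  forall m, count (fun z => z <= m) b <= count (fun z => z <= m) t.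
Proof.
elim: b t => [|x b IH] [|y t] //; rewrite !sorted_gtn_cons /=.
move=> /andP [lt_b_x sb] /andP [lt_t_y st] /andP [lt_yx bt] m /=.
case: (leqP x m) => [le_xm | lt_mx].
  have le_ym := ltnW (leq_trans lt_yx le_xm).
  rewrite le_ym (count_le_all_lt lt_b_x le_xm) (count_le_all_lt lt_t_y le_ym).
  by move: bt; rewrite all2E => /andP [/eqP ->].
by rewrite add0n (leq_trans (IH t sb st bt m)) ?leq_addl.
Qed.

Lemma ballot_all2_gtn b t : size b = size t -> sorted gtn b -> sorted gtn t ->
  {in b, forall z, z \notin t} ->
  (forall m, count (fun z => z <= m) b <= count (fun z => z <= m) t) -> all2 gtn b t.
Proof.
elim: b t => [|x b IH] [|y t] //; rewrite !sorted_gtn_cons /=.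
move=> [eq_sz] /andP [lt_b_x sb] /andP [lt_t_y st] bt ballot.
have lt_yx : y < x.
  case: (ltngtP y x) => // [lt_xy | eq_yx].
    have := ballot x; rewrite leqnn (count_le_all_lt lt_b_x (leqnn x)) (leqNgt y x) lt_xy.
    by have := count_size (fun z => z <= x) t; rewrite eq_sz /=; lia.
  by have := bt x; rewrite !inE eq_yx eqxx /= => /(_ isT).
rewrite lt_yx IH // => [z zb | m].
  by have := bt z; rewrite !inE zb orbT negb_or => /(_ isT) /andP [].
case: (leqP y m) => [le_ym | lt_my].
  by rewrite (count_le_all_lt lt_t_y le_ym) -eq_sz count_size.
have := ballot m; rewrite (leqNgt y m) lt_my (leqNgt x m) (ltn_trans lt_my lt_yx).
by rewrite !add0n.
Qed.

Definition positions (s : seq bool) (c : bool) : seq nat :=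
  rev [seq i.+1 | i <- iota 0 (size s) & nth false s i == c].

Lemma mem_positions s c x :
  (x \in positions s c) = (0 < x <= size s) && (nth false s x.-1 == c).
Proof.
rewrite mem_rev; case: x => [|x] /=; first by apply/mapP => -[].
by rewrite (mem_map succn_inj) mem_filter mem_iota /= add0n andbC.
Qed.

Lemma size_positions s c : size (positions s c) = count (pred1 c) s.
Proof.
rewrite size_rev size_map size_filter -[in RHS](mkseq_nth false s) count_map.
by apply: eq_count => i; rewrite /= eq_sym.
Qed.

Lemma sorted_positions s c : sorted gtn (positions s c).
Proof.
rewrite rev_sorted sorted_map.
by apply/sorted_filter/iota_ltn_sorted; apply: ltn_trans.
Qed.

Lemma filter_iota_lt m n : [seq i <- iota 0 n | i < m] = take m (iota 0 n).
Proof.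
rewrite take_iota; case: (leqP m n) => [le_mn | lt_nm].
  by have := filter_iota_ltn 0 le_mn; rewrite add0n.
rewrite -[RHS]filter_predT; apply: eq_in_filter => i.
by rewrite mem_iota => /andP [_ /ltn_trans ->].
Qed.

Lemma count_le_positions s c m :
  count (fun z => z <= m) (positions s c) = count (pred1 c) (take m s).
Proof.
rewrite count_rev count_map count_filter -[in take _ s](mkseq_nth false s) /mkseq.
rewrite -map_take -filter_iota_lt count_map count_filter.
by apply: eq_count => i /=; rewrite andbC eq_sym.
Qed.

Lemma big_positions (F : nat -> nat) s c :
  \sum_(i < size s | nth false s i == c) F i = \sum_(p <- positions s c) F p.-1.
Proof.
rewrite big_rev big_map big_filter -(big_mkord (fun i => nth false s i == c)).
by rewrite /index_iota subn0.
Qed.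

Lemma xpos_positions s m : xpos s m = count (fun z => z <= m) (positions s false).
Proof. by rewrite count_le_positions; apply: eq_count => -[]. Qed.

Lemma ypos_positions s m : ypos s m = count (fun z => z <= m) (positions s true).
Proof. by rewrite count_le_positions; apply: eq_count => -[]. Qed.

Lemma sum_east_count_le s (P : seq nat) :
  \sum_(i < size s | ~~ nth false s i) count (fun z => z <= i) P =
  nlt_pairs (positions s false) P.
Proof.
under eq_bigl do rewrite -eqbF_neg.
rewrite (big_positions (fun i => count (fun z => z <= i) P)).
apply: eq_big_seq => p; rewrite mem_positions => /andP [/andP [p_gt0 _] _].
by apply: eq_count => z; rewrite -{2}(prednK p_gt0) ltnS.
Qed.

Lemma size_east_dyck k s : dyckb k s -> size (positions s false) = k.
Proof.
case/and3P => /eqP sz_s /eqP n_north _; rewrite size_positions.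
have -> : count (pred1 false) s = count (predC id) s by apply: eq_count => -[].
by have := count_predC id s; rewrite sz_s n_north; lia.
Qed.

Lemma dyck_ballot k s : dyckb k s -> forall m,
  count (fun z => z <= m) (positions s false) <= count (fun z => z <= m) (positions s true).
Proof.
case/and3P => _ _ /allP dyck m; rewrite -xpos_positions -ypos_positions.
case: (leqP m (size s)) => [le_m_s | lt_s_m]; first by apply: dyck; rewrite mem_iota.
have := dyck (size s); rewrite mem_iota ltnS leqnn => /(_ isT).
by rewrite /xpos /ypos !take_oversize // ltnW.
Qed.

Lemma area_dyck k s : dyckb k s ->
  area s + k + 'C(k, 2) = nlt_pairs (positions s false) (positions s true).
Proof.
move=> Ds; have size_E := size_east_dyck Ds.
have := Ds; case/and3P => _ _ /allP dyck.
rewrite -size_E -(nlt_pairs_sorted (sorted_positions s false)) -!sum_east_count_le.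
rewrite -sum1_size -(big_positions (fun=> 1)).
under eq_bigl do rewrite eqbF_neg.
rewrite /area -!big_split /=; apply: eq_bigr => i east_i.
have := dyck i.+1; rewrite mem_iota ltnS ltn_ord => /(_ isT).
rewrite -xpos_positions -ypos_positions /xpos /ypos (take_nth false) //.
by rewrite -cats1 !count_cat /= (negbTE east_i); lia.
Qed.

Lemma all2_gtnE b t : all2 gtn b t =
  (size b == size t) && all (fun i => nth 0 t i < nth 0 b i) (iota 0 (size b)).
Proof.
elim: b t => [|x b IH] [|y t] //=.
by rewrite -[1]/(1 + 0) iotaDl all_map IH andbCA.
Qed.

Lemma inT_spec k b t : inT k b t ->
  [/\ size b = k, sorted gtn b, sorted gtn t, all2 gtn b t &
      [/\ {in t, forall x, 0 < x <= 2 * k} &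
          forall x, (x \in b) = (0 < x <= 2 * k) && (x \notin t)]].
Proof.
case/and5P => /eqP size_b /eqP size_t /allP in_range /allP cover /and3P [sb st bt].
have mem_range x : (x \in iota 1 (2 * k)) = (0 < x <= 2 * k).
  by rewrite mem_iota; apply/idP/idP => /andP [? ?]; apply/andP; split; lia.
have : uniq (b ++ t).
  apply: (leq_size_uniq (iota_uniq 1 (2 * k))) => [x /cover // |].
  by rewrite size_cat size_iota size_b size_t; lia.
rewrite cat_uniq => /and3P [_ /hasPn disj _].
split=> //; first by rewrite all2_gtnE size_b size_t eqxx.
split=> [x xt | x]; first by rewrite -mem_range in_range // mem_cat xt orbT.
apply/idP/andP => [xb | [x_range xNt]].
  by rewrite -mem_range in_range ?mem_cat ?xb //; split=> //; apply/negP => /disj; rewrite xb.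
by move: x_range; rewrite -mem_range => /cover; rewrite mem_cat (negbTE xNt) orbF.
Qed.

Definition north_path n (t : seq nat) : seq bool := mkseq (fun i => i.+1 \in t) n.

Lemma nth_north_path n t x : 0 < x <= n -> nth false (north_path n t) x.-1 = (x \in t).
Proof. by case: x => // x /andP [_ lt_xn]; rewrite nth_mkseq. Qed.

Lemma north_path_positions s : north_path (size s) (positions s true) = s.
Proof.
rewrite -[RHS](mkseq_nth false s); apply: eq_mkseq => i.
by rewrite mem_positions /= eqb_id; case: (ltnP i (size s)) => // le_s_i; rewrite nth_default.
Qed.

Lemma positions_north_path k b t : inT k b t ->
  positions (north_path (2 * k) t) true = t /\ positions (north_path (2 * k) t) false = b.
Proof.
case/inT_spec => _ sb st _ [t_range mem_b].
have gtn_irr : irreflexive gtn by move=> x; rewrite /= ltnn.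
have gtn_trans : transitive gtn by apply/rev_trans/ltn_trans.
split; apply: (irr_sorted_eq gtn_trans gtn_irr) => //; try exact: sorted_positions.
  move=> x; rewrite mem_positions size_mkseq.
  case: (boolP (0 < x <= 2 * k)) => [x_range | x_out] /=; first by rewrite nth_north_path.
  by apply/esym/negP => /t_range; apply/negP.
move=> x; rewrite mem_positions size_mkseq mem_b.
by case: (boolP (0 < x <= 2 * k)) => //= x_range; rewrite nth_north_path.
Qed.

Lemma dyck_inT k s : dyckb k s -> inT k (positions s false) (positions s true).
Proof.
move=> Ds; have size_E := size_east_dyck Ds.
have := Ds; case/and3P => /eqP sz_s /eqP n_north _.
have size_N : size (positions s true) = k.
  by rewrite size_positions -n_north; apply: eq_count => -[].
rewrite /inT size_E size_N !eqxx !sorted_positions /=; apply/and3P; split.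
- apply/allP => x; rewrite mem_cat !mem_positions mem_iota sz_s.
  by case/orP => /andP [/andP [? ?] _]; apply/andP; split; lia.
- apply/allP => x; rewrite mem_iota mem_cat !mem_positions sz_s => /andP [? ?].
  have -> : 0 < x <= 2 * k by apply/andP; split; lia.
  by case: (nth false s x.-1).
- have : all2 gtn (positions s false) (positions s true).
    apply: ballot_all2_gtn; rewrite ?size_E ?size_N ?sorted_positions //; last exact: dyck_ballot Ds.
    by move=> z; rewrite !mem_positions => /andP [_ /eqP ->]; rewrite andbF.
  by rewrite all2_gtnE size_E => /andP [].
Qed.

Lemma inT_dyck k b t : inT k b t -> dyckb k (north_path (2 * k) t).
Proof.
move=> bt; have [pos_N pos_E] := positions_north_path bt.
case/inT_spec: bt => size_b sb st bt _.
have size_t : size t = k by move: bt; rewrite all2E -size_b => /andP [/eqP].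
rewrite /dyckb size_mkseq eqxx andTb; apply/andP; split.
  rewrite -[X in _ == X]size_t -[X in size X]pos_N size_positions.
  by apply/eqP; apply: eq_count => -[].
apply/allP => i _; rewrite xpos_positions ypos_positions pos_N pos_E.
exact: all2_gtn_ballot.
Qed.

Lemma invnum_wordT_dyck k s : dyckb k s ->
  invnum (wordT (positions s false) (positions s true)) = area s + k.
Proof.
move=> Ds; have /inT_spec [size_E sE sN EN _] := dyck_inT Ds.
by have := invnum_wordT sE sN EN; rewrite -(area_dyck Ds) size_E; lia.
Qed.

Definition tuple_of_seq n m (l : seq nat) : n.-tuple 'I_m.+1 :=
  [tuple inord (nth 0 l i) | i < n].

Lemma val_mktuple (T : Type) n (f : nat -> T) : tval [tuple f i | i < n] = mkseq f n.
Proof. by rewrite /= /mkseq -val_enum_ord -map_comp. Qed.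

Lemma map_val_tuple_of_seq n m l : size l = n -> all (fun x => x <= m) l ->
  map val (tuple_of_seq n m l) = l.
Proof.
move=> size_l /allP le_l_m.
rewrite (@val_mktuple _ _ (fun i => inord (nth 0 l i))) -map_comp -[RHS](mkseq_nth 0 l) size_l.
apply: eq_map => i /=; rewrite inordK // ltnS.
by case: (ltnP i (size l)) => [lt_il | ?]; [apply: le_l_m; apply: mem_nth | rewrite nth_default].
Qed.

Lemma tuple_of_seqK n m (u : n.-tuple 'I_m.+1) : tuple_of_seq n m (map val u) = u.
Proof.
apply/val_inj/(inj_map val_inj); rewrite map_val_tuple_of_seq ?size_map ?size_tuple //.
by apply/allP => x /mapP [y _ ->]; rewrite -ltnS ltn_ord.
Qed.

Section Encoding.
Variable k : nat.
Local Notation pairT := (k.-tuple 'I_(2 * k).+1 * k.-tuple 'I_(2 * k).+1)%type.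

Definition pair_of_path (P : (2 * k).-tuple bool) : pairT :=
  (tuple_of_seq k (2 * k) (positions P false), tuple_of_seq k (2 * k) (positions P true)).

Definition path_of_pair (bt : pairT) : (2 * k).-tuple bool :=
  [tuple (val i).+1 \in map val bt.2 | i < 2 * k].

Lemma val_path_of_pair bt : path_of_pair bt = north_path (2 * k) (map val bt.2) :> seq bool.
Proof. exact: (@val_mktuple _ _ (fun i => i.+1 \in map val bt.2)). Qed.

Lemma map_val_tuple_of_positions (P : (2 * k).-tuple bool) c : dyckb k P ->
  map val (tuple_of_seq k (2 * k) (positions P c)) = positions P c.
Proof.
move=> DP; have /inT_spec [size_E _ _ EN _] := dyck_inT DP.
apply: map_val_tuple_of_seq.
  by case: c; rewrite ?size_E //; move: EN; rewrite all2E size_E => /andP [/eqP].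
by apply/allP => x; rewrite mem_positions size_tuple => /andP [/andP []].
Qed.

Lemma path_of_pairK : {in [pred bt : pairT | inT k (map val bt.1) (map val bt.2)],
  cancel path_of_pair pair_of_path}.
Proof.
case=> b t /= bt; have [pos_N pos_E] := positions_north_path bt.
by rewrite /pair_of_path val_path_of_pair pos_N pos_E !tuple_of_seqK.
Qed.

Lemma pair_of_path_inT (P : (2 * k).-tuple bool) :
  inT k (map val (pair_of_path P).1) (map val (pair_of_path P).2) &&
  (path_of_pair (pair_of_path P) == P) = dyckb k P.
Proof.
apply/idP/idP => [/andP [bt /eqP <-] | DP]; first by rewrite val_path_of_pair; exact: inT_dyck bt.
rewrite /= !map_val_tuple_of_positions // (dyck_inT DP) /=; apply/eqP/val_inj.
apply: etrans (val_path_of_pair _) _.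
by rewrite map_val_tuple_of_positions // -[in north_path _](size_tuple P) north_path_positions.
Qed.

End Encoding.

Import GRing.Theory.
Local Open Scope ring_scope.

Theorem mainTheorem1 (k : nat) : invGen k = 'X^k * qCatalan k.
Proof.
rewrite /invGen /qCatalan (reindex_onto (@pair_of_path k) (@path_of_pair k)); last exact: path_of_pairK.
rewrite big_distrr /=; apply: eq_big => P; first exact: pair_of_path_inT.
rewrite pair_of_path_inT => DP.
by rewrite /= !map_val_tuple_of_positions // (invnum_wordT_dyck DP) -exprD addnC.
Qed.
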